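(* Let $n,m,r\geq 1$, $\gamma>0$, $\tau_1,\tau_2>0$, $a\in\Delta_n^+$, $b\in\Delta_m^+$, and let $\xi^{(1)}\in\mathbb{R}_+^{n\times r}$, $\xi^{(2)}\in\mathbb{R}_+^{m\times r}$, $\xi^{(3)}\in\mathbb{R}_+^{r}$. Define, for $f_1\in\mathbb{R}^n$, $f_2\in\mathbb{R}^m$, $h_1,h_2\in\mathbb{R}^r$, $$\mathcal{D}(f_1,h_1,f_2,h_2):= - F_{\tau_1,a}^{*}(-f_1) - \frac{1}{\gamma}\langle e^{\gamma(f_1\oplus h_1)} -1, \xi^{(1)}\rangle - F_{\tau_2,b}^{*}(-f_2) - \frac{1}{\gamma} \langle e^{\gamma(f_2\oplus h_2)} -1, \xi^{(2)}\rangle - \frac{1}{\gamma}\langle e^{- \gamma(h_1 + h_2)} - 1,\xi^{(3)}\rangle.$$ Let $\tilde f_1\in\mathbb{R}^n$, $\tilde f_2\in\mathbb{R}^m$ and $\tilde h_1,\tilde h_2\in\mathbb{R}^r$. Then the problem $$\sup_{\lambda_1,\lambda_2\in\mathbb{R}} \mathcal{D}(\tilde f_1+\lambda_1,\tilde h_1-\lambda_1,\tilde f_2+\lambda_2,\tilde h_2-\lambda_2)$$ admits a unique solution $(\lambda_1^\star,\lambda_2^\star)$, given by $$\lambda_1^\star= \left(1- \frac{\tau_1\tau_2}{(1/\gamma +\tau_1)(1/\gamma+\tau_2)}\right)^{-1}\left(\frac{\tau_1/\gamma}{1/\gamma+\tau_1}c_1 - \frac{\tau_1/\gamma}{1/\gamma+\tau_1}\frac{\tau_2}{1/\gamma+\tau_2}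 c_2\right),$$ $$\lambda_2^\star= \left(1- \frac{\tau_1\tau_2}{(1/\gamma +\tau_1)(1/\gamma+\tau_2)}\right)^{-1}\left(\frac{\tau_2/\gamma}{1/\gamma+\tau_2}c_2 - \frac{\tau_1/\gamma}{1/\gamma +\tau_1}\frac{\tau_2}{1/\gamma+\tau_2} c_1\right),$$ where $$c_1:= \log\left( \frac{\langle\exp(- \tilde f_1/\tau_1),a\rangle}{\langle \exp(- \gamma ( \tilde h_1+ \tilde h_2)),\xi^{(3)}\rangle}\right),\qquad c_2:= \log\left( \frac{\langle\exp(- \tilde f_2/\tau_2),b\rangle}{\langle \exp(- \gamma ( \tilde h_1+ \tilde h_2)),\xi^{(3)}\rangle}\right).$$
   Context: $\Delta_n^+$ denotes the set of positive vectors in $\mathbb{R}^n$ summing to $1$. $\mathrm{KL}$ is the generalized Kullback–Leibler divergence $\mathrm{KL}(p|q):=\sum_i p_i\log(p_i/q_i)+q_i-p_i$. For $\tau>0$ and $z\geq 0$ coordinate-wise, $F_{\tau,z}(s):=\tau\,\mathrm{KL}(s|z)$, and $F_{\tau,z}^*(y):=\sup_s\{\langle s,y\rangle-F_{\tau,z}(s)\}$ is its convex conjugate. For $f\in\mathbb{R}^n$, $h\in\mathbb{R}^r$, $f\oplus h$ is the $n\times r$ matrix with entries $f_i+h_j$; adding a scalar $\lambda$ to a vector adds it to every coordinate; exponentials are entrywise, and $\langle\cdot,\cdot\rangle$ is the entrywise inner product. *)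

From mathcomp Require Import all_boot all_order all_algebra.
From mathcomp Require Import all_classical all_reals all_analysis.
Set Implicit Arguments. Unset Strict Implicit. Unset Printing Implicit Defensive.
Import Order.TTheory GRing.Theory Num.Theory.
Local Open Scope ring_scope.

Definition simplex_pos (R : realType) (n : nat) (a : 'I_n -> R) : Prop :=
  (forall i, 0 < a i) /\ \sum_(i < n) a i = 1.

(* Generalized KL divergence KL(p|q) = sum_i p_i log(p_i/q_i) + q_i - p_i,
   with the usual convex-analysis conventions: 0 log(0/q) = 0, and the value
   is +oo if some p_i < 0 or p_i > 0 with q_i = 0. *)
Definition KL (R : realType) (n : nat) (p q : 'I_n -> R) : \bar R :=
  if [forall i, (0 <= p i) && ((q i == 0) ==> (p i == 0))]
  then (\sum_(i < n) (p i * ln (p i / q i) + q i - p i))%:E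
  else +oo%E.

Definition Ffun (R : realType) (n : nat) (tau : R) (z s : 'I_n -> R) : \bar R :=
  (tau%:E * KL s z)%E.

Definition Fconj (R : realType) (n : nat) (tau : R) (z y : 'I_n -> R) : \bar R :=
  ereal_sup (range (fun s : 'I_n -> R =>
     ((\sum_(i < n) s i * y i)%:E - Ffun tau z s)%E)).

Definition Dobj (R : realType) (n m r : nat) (gamma tau1 tau2 : R)
  (a : 'I_n -> R) (b : 'I_m -> R)
  (xi1 : 'I_n -> 'I_r -> R) (xi2 : 'I_m -> 'I_r -> R) (xi3 : 'I_r -> R)
  (f1 : 'I_n -> R) (h1 : 'I_r -> R) (f2 : 'I_m -> R) (h2 : 'I_r -> R) : \bar R :=
  (- Fconj tau1 a (fun i => (- f1 i)%R)
   - (gamma^-1 * \sum_(i < n) \sum_(j < r)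
        (expR (gamma * (f1 i + h1 j)) - 1) * xi1 i j)%:E
   - Fconj tau2 b (fun i => (- f2 i)%R)
   - (gamma^-1 * \sum_(i < m) \sum_(j < r)
        (expR (gamma * (f2 i + h2 j)) - 1) * xi2 i j)%:E
   - (gamma^-1 * \sum_(j < r)
        (expR (- gamma * (h1 j + h2 j)) - 1) * xi3 j)%:E)%E.

(* Since the conjugate of [s |-> tau KL(s|a)] is [y |-> tau <a, e^(y/tau) - 1>],
   and the xi1, xi2 coupling terms only see f + h, along the two shifts the
   dual objective is a constant minus
     Phi(l1, l2) = tau1 A e^(-l1/tau1) + tau2 B e^(-l2/tau2)
                   + (S/gamma) e^(gamma (l1 + l2)),
   with A = <e^(-f1/tau1), a>, B = <e^(-f2/tau2), b> and
   S = <e^(-gamma (h1 + h2)), xi3>.  At a critical point of Phi,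
   A e^(-l1/tau1) = B e^(-l2/tau2) = S e^(gamma (l1 + l2)); taking logarithms
   gives a 2x2 linear system solved by the stated lambda1*, lambda2*.  Summing
   the tangent inequality e^x >= e^y (1 + x - y), strict unless x = y, over the
   three exponentials, the linear parts cancel at the critical point, so it is
   the unique minimiser of Phi. *)

From mathcomp Require Import all_boot all_order all_algebra.
From mathcomp Require Import all_classical all_reals all_analysis.
From mathcomp Require Import ring lra.
Import Order.TTheory GRing.Theory Num.Theory.
Set Implicit Arguments. Unset Strict Implicit. Unset Printing Implicit Defensive.
Local Open Scope ring_scope.

Lemma expR_tangent (R : realType) (x y : R) :
  expR y * (1 + (x - y)) <= expR x ?= iff (x == y).
Proof.
have -> : expR x = expR y * expR (x - y) by rewrite -expRD addrC subrK.
rewrite (mono_leif (ler_pM2l (expR_gt0 y))); apply/leifP.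
have [->|xy] := eqVneq x y; first by rewrite subrr addr0 expR0.
by rewrite expR_gt1Dx // subr_eq0.
Qed.

Lemma fenchel_young_KL_term (R : realType) (tau a s y : R) :
  0 < tau -> 0 < a -> 0 <= s ->
  s * y - tau * (s * ln (s / a) + a - s) <= tau * (a * (expR (y / tau) - 1)).
Proof.
move=> tau_gt0 a_gt0; rewrite le0r => /predU1P[->|s_gt0].
  have : 0 <= tau * (a * expR (y / tau)) by rewrite !mulr_ge0 ?expR_ge0 ?ltW.
  rewrite !(mul0r, mulr0, sub0r, add0r, subr0); lra.
have := (expR_tangent (y / tau) (ln (s / a))).1.
rewrite lnK ?posrE ?divr_gt0 // -(ler_pM2l (mulr_gt0 tau_gt0 a_gt0)).
have -> : tau * a * (s / a * (1 + (y / tau - ln (s / a))))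
          = s * y - tau * (s * ln (s / a) + a - s) + tau * a.
  by field; rewrite !gt_eqF.
rewrite -lerBrDr; congr (_ <= _); ring.
Qed.

Lemma FconjE (R : realType) (n : nat) (tau : R) (a y : 'I_n -> R) :
  0 < tau -> (forall i, 0 < a i) ->
  Fconj tau a y = (tau * \sum_(i < n) a i * (expR (y i / tau) - 1))%:E.
Proof.
move=> tau_gt0 a_gt0; apply/eqP; rewrite eq_le; apply/andP; split.
  apply: ge_ereal_sup => _ [s _ <-]; rewrite /Ffun /KL.
  case: ifPn => [/forallP s_dom|_]; last first.
    by rewrite mulry gtr0_sg // mul1e leNye.
  rewrite -EFinM -EFinB lee_fin mulr_sumr -sumrB mulr_sumr; apply: ler_sum => i _.
  by apply: fenchel_young_KL_term => //; case/andP: (s_dom i).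
pose s_opt i := a i * expR (y i / tau).
apply: ereal_sup_ubound; exists s_opt => //; rewrite /Ffun /KL.
case: ifPn => [_|/forallP[] i]; last first.
  by rewrite mulr_ge0 ?expR_ge0 ?ltW //= gt_eqF.
rewrite -EFinM -EFinB; congr EFin.
rewrite !mulr_sumr -sumrB; apply: eq_bigr => i _.
rewrite /s_opt mulrC (mulrC (a i)) mulrK ?unitfE ?gt_eqF // expRK.
by field; rewrite gt_eqF.
Qed.

Lemma sum_expR_shift (R : realType) (n : nat) (tau l : R) (a f : 'I_n -> R) :
  \sum_(i < n) a i = 1 ->
  \sum_(i < n) a i * (expR (- (f i + l) / tau) - 1) =
  (\sum_(i < n) expR (- f i / tau) * a i) * expR (- l / tau) - 1.
Proof.
move=> a_sum1; rewrite -{2}a_sum1 mulr_suml -sumrB; apply: eq_bigr => i _.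
by rewrite mulrBr mulr1 mulrAC mulrC -expRD opprD mulrDl.
Qed.

Section ShiftCost.
Variables (R : realType) (tau1 tau2 gamma A B S : R).
Hypotheses (tau1_gt0 : 0 < tau1) (tau2_gt0 : 0 < tau2) (gamma_gt0 : 0 < gamma).
Hypotheses (A_gt0 : 0 < A) (B_gt0 : 0 < B) (S_gt0 : 0 < S).

Definition shift_cost (l1 l2 : R) : R :=
  tau1 * A * expR (- l1 / tau1) + tau2 * B * expR (- l2 / tau2)
  + gamma^-1 * S * expR (gamma * (l1 + l2)).

Definition shift_stationary (l1 l2 : R) : Prop :=
  A * expR (- l1 / tau1) = S * expR (gamma * (l1 + l2)) /\
  B * expR (- l2 / tau2) = S * expR (gamma * (l1 + l2)).

Lemma shift_cost_min p1 p2 l1 l2 : shift_stationary p1 p2 ->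
  shift_cost p1 p2 <= shift_cost l1 l2 ?= iff (l1 == p1) && (l2 == p2).
Proof.
move=> [stat1 stat2]; set M := S * expR (gamma * (p1 + p2)) in stat1 stat2.
have tangent (c x y : R) : 0 < c ->
    c * (expR y * (1 + (x - y))) <= c * expR x ?= iff (x == y).
  by move=> c_gt0; rewrite (mono_leif (ler_pM2l c_gt0)); exact: expR_tangent.
have gamma_inv_gt0 : 0 < gamma^-1 by rewrite invr_gt0.
have := leifD
  (leifD (tangent _ (- l1 / tau1) (- p1 / tau1) (mulr_gt0 tau1_gt0 A_gt0))
         (tangent _ (- l2 / tau2) (- p2 / tau2) (mulr_gt0 tau2_gt0 B_gt0)))
  (tangent _ (gamma * (l1 + l2)) (gamma * (p1 + p2)) (mulr_gt0 gamma_inv_gt0 S_gt0)).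
have e1 : tau1 * A * (expR (- p1 / tau1) * (1 + (- l1 / tau1 - - p1 / tau1)))
          = tau1 * A * expR (- p1 / tau1) + M * (p1 - l1).
  by rewrite mulrA -(mulrA tau1) stat1; field; rewrite gt_eqF.
have e2 : tau2 * B * (expR (- p2 / tau2) * (1 + (- l2 / tau2 - - p2 / tau2)))
          = tau2 * B * expR (- p2 / tau2) + M * (p2 - l2).
  by rewrite mulrA -(mulrA tau2) stat2; field; rewrite gt_eqF.
have e3 : gamma^-1 * S * (expR (gamma * (p1 + p2))
            * (1 + (gamma * (l1 + l2) - gamma * (p1 + p2))))
          = gamma^-1 * S * expR (gamma * (p1 + p2)) + M * (l1 + l2 - (p1 + p2)).
  by rewrite /M; field; rewrite gt_eqF.
have linear_terms_cancel (u v w : R) :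
    u + M * (p1 - l1) + (v + M * (p2 - l2)) + (w + M * (l1 + l2 - (p1 + p2)))
    = u + v + w by ring.
have eq1 : (- l1 / tau1 == - p1 / tau1) = (l1 == p1).
  by rewrite (inj_eq (mulIf (invr_neq0 (lt0r_neq0 tau1_gt0)))) eqr_opp.
have eq2 : (- l2 / tau2 == - p2 / tau2) = (l2 == p2).
  by rewrite (inj_eq (mulIf (invr_neq0 (lt0r_neq0 tau2_gt0)))) eqr_opp.
have eq3 : (l1 == p1) && (l2 == p2) -> gamma * (l1 + l2) == gamma * (p1 + p2).
  by case/andP=> /eqP-> /eqP->.
by rewrite e1 e2 e3 linear_terms_cancel eq1 eq2 (andb_idr eq3).
Qed.

Lemma shift_stationary_ln l1 l2 :
  ln (A / S) = l1 / tau1 + gamma * (l1 + l2) ->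
  ln (B / S) = l2 / tau2 + gamma * (l1 + l2) ->
  shift_stationary l1 l2.
Proof.
have exp_balance X l : 0 < X -> ln (X / S) = l + gamma * (l1 + l2) ->
    X * expR (- l) = S * expR (gamma * (l1 + l2)).
  move=> X_gt0 lnX; rewrite -{1}(divfK (lt0r_neq0 S_gt0) X).
  by rewrite -[X / S]lnK ?posrE ?divr_gt0 // lnX mulrC mulrA -expRD addKr mulrC.
move=> /(exp_balance _ _ A_gt0) + /(exp_balance _ _ B_gt0).
by rewrite /shift_stationary !mulNr.
Qed.
End ShiftCost.

Lemma Dobj_shift (R : realType) (n m r : nat) (gamma tau1 tau2 : R)
  (a : 'I_n -> R) (b : 'I_m -> R)
  (xi1 : 'I_n -> 'I_r -> R) (xi2 : 'I_m -> 'I_r -> R) (xi3 : 'I_r -> R)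
  (f1 : 'I_n -> R) (f2 : 'I_m -> R) (h1 h2 : 'I_r -> R) :
  0 < tau1 -> 0 < tau2 -> simplex_pos a -> simplex_pos b ->
  exists C, forall l1 l2,
    Dobj gamma tau1 tau2 a b xi1 xi2 xi3
      (fun i => f1 i + l1) (fun j => h1 j - l1)
      (fun i => f2 i + l2) (fun j => h2 j - l2) =
    (C - shift_cost tau1 tau2 gamma
           (\sum_(i < n) expR (- f1 i / tau1) * a i)
           (\sum_(i < m) expR (- f2 i / tau2) * b i)
           (\sum_(j < r) expR (- gamma * (h1 j + h2 j)) * xi3 j) l1 l2)%:E.
Proof.
move=> tau1_gt0 tau2_gt0 [a_gt0 a_sum1] [b_gt0 b_sum1].
pose coupling k (f : 'I_k -> R) (h : 'I_r -> R) xi :=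
  gamma^-1 * \sum_(i < k) \sum_(j < r) (expR (gamma * (f i + h j)) - 1) * xi i j.
have coupling_shift k f h xi l :
    coupling k (fun i => f i + l) (fun j => h j - l) xi = coupling k f h xi.
  congr (_ * _); apply: eq_bigr => i _; apply: eq_bigr => j _.
  by rewrite addrACA subrr addr0.
exists (tau1 + tau2 - coupling n f1 h1 xi1 - coupling m f2 h2 xi2
        + gamma^-1 * \sum_(j < r) xi3 j) => l1 l2.
have dual_shift : \sum_(j < r) (expR (- gamma * (h1 j - l1 + (h2 j - l2))) - 1) * xi3 j
    = (\sum_(j < r) expR (- gamma * (h1 j + h2 j)) * xi3 j) * expR (gamma * (l1 + l2))
      - \sum_(j < r) xi3 j.
  rewrite mulr_suml -sumrB; apply: eq_bigr => j _.
  by rewrite mulrBl mul1r mulrAC -expRD; congr (expR _ * _ - _); ring.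
rewrite /Dobj !FconjE // !sum_expR_shift // dual_shift.
rewrite -/(coupling n _ _ _) -/(coupling m _ _ _) !coupling_shift.
by rewrite -!EFinN -!EFinB /shift_cost; congr EFin; ring.
Qed.

Lemma shift_linear_solve (R : realType) (gamma tau1 tau2 c1 c2 : R) :
  0 < gamma -> 0 < tau1 -> 0 < tau2 ->
  let g := gamma^-1 in
  let K := (1 - tau1 * tau2 / ((g + tau1) * (g + tau2)))^-1 in
  let lam1 := K * ((tau1 / gamma) / (g + tau1) * c1
                   - (tau1 / gamma) / (g + tau1) * (tau2 / (g + tau2)) * c2) in
  let lam2 := K * ((tau2 / gamma) / (g + tau2) * c2
                   - (tau1 / gamma) / (g + tau1) * (tau2 / (g + tau2)) * c1) in
  c1 = lam1 / tau1 + gamma * (lam1 + lam2) /\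
  c2 = lam2 / tau2 + gamma * (lam1 + lam2).
Proof.
move=> gamma_gt0 tau1_gt0 tau2_gt0 g K lam1 lam2.
have p1 := mulr_gt0 tau1_gt0 gamma_gt0; have p2 := mulr_gt0 tau2_gt0 gamma_gt0.
by split; rewrite /lam1 /lam2 /K /g; field; apply/and5P; split; apply/eqP => E; nra.
Qed.

Lemma sumr_expR_gt0 (R : realType) (I : finType) (u w : I -> R) (i0 : I) :
  (forall i, 0 <= w i) -> 0 < w i0 -> 0 < \sum_i expR (u i) * w i.
Proof.
move=> w_ge0 wi0_gt0; rewrite (bigD1 i0) //= ltr_wpDr ?mulr_gt0 ?expR_gt0 //.
by rewrite sumr_ge0 // => i _; rewrite mulr_ge0 ?expR_ge0.
Qed.

Theorem proposition2 (R : realType) (n m r : nat) (gamma tau1 tau2 : R)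
  (a : 'I_n -> R) (b : 'I_m -> R)
  (xi1 : 'I_n -> 'I_r -> R) (xi2 : 'I_m -> 'I_r -> R) (xi3 : 'I_r -> R)
  (f1 : 'I_n -> R) (f2 : 'I_m -> R) (h1 h2 : 'I_r -> R) :
  (0 < n)%N -> (0 < m)%N -> (0 < r)%N ->
  0 < gamma -> 0 < tau1 -> 0 < tau2 ->
  simplex_pos a -> simplex_pos b ->
  (forall i j, 0 <= xi1 i j) -> (forall i j, 0 <= xi2 i j) ->
  (forall j, 0 <= xi3 j) -> (exists j, 0 < xi3 j) ->
  let S := \sum_(j < r) expR (- gamma * (h1 j + h2 j)) * xi3 j in
  let c1 := ln ((\sum_(i < n) expR (- f1 i / tau1) * a i) / S) in
  let c2 := ln ((\sum_(i < m) expR (- f2 i / tau2) * b i) / S) in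
  let g := gamma^-1 in
  let K := (1 - tau1 * tau2 / ((g + tau1) * (g + tau2)))^-1 in
  let lam1 := K * ((tau1 / gamma) / (g + tau1) * c1
                   - (tau1 / gamma) / (g + tau1) * (tau2 / (g + tau2)) * c2) in
  let lam2 := K * ((tau2 / gamma) / (g + tau2) * c2
                   - (tau1 / gamma) / (g + tau1) * (tau2 / (g + tau2)) * c1) in
  let Dl (l1 l2 : R) := Dobj gamma tau1 tau2 a b xi1 xi2 xi3
        (fun i => f1 i + l1) (fun j => h1 j - l1)
        (fun i => f2 i + l2) (fun j => h2 j - l2) in
  (forall l1 l2, (Dl l1 l2 <= Dl lam1 lam2)%E) /\
  (forall l1 l2, (forall k1 k2, (Dl k1 k2 <= Dl l1 l2)%E) ->
                 l1 = lam1 /\ l2 = lam2).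
Proof.
move=> n_gt0 m_gt0 _ gamma_gt0 tau1_gt0 tau2_gt0 a_simplex b_simplex _ _ xi3_ge0
  [j0 xi3_j0_gt0] S c1 c2 g K lam1 lam2 Dl.
have [[a_gt0 _] [b_gt0 _]] := (a_simplex, b_simplex).
set A := \sum_(i < n) expR (- f1 i / tau1) * a i.
set B := \sum_(i < m) expR (- f2 i / tau2) * b i.
have A_gt0 : 0 < A := sumr_expR_gt0 _ (fun i => ltW (a_gt0 i)) (a_gt0 (Ordinal n_gt0)).
have B_gt0 : 0 < B := sumr_expR_gt0 _ (fun i => ltW (b_gt0 i)) (b_gt0 (Ordinal m_gt0)).
have S_gt0 : 0 < S := sumr_expR_gt0 _ xi3_ge0 xi3_j0_gt0.
have [C DlE] :=
  Dobj_shift gamma xi1 xi2 xi3 f1 f2 h1 h2 tau1_gt0 tau2_gt0 a_simplex b_simplex.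
have [c1E c2E] := shift_linear_solve c1 c2 gamma_gt0 tau1_gt0 tau2_gt0.
have lam_stationary := shift_stationary_ln A_gt0 B_gt0 S_gt0 c1E c2E.
have lam_min l1 l2 :=
  shift_cost_min tau1_gt0 tau2_gt0 gamma_gt0 A_gt0 B_gt0 S_gt0 l1 l2 lam_stationary.
split=> [l1 l2 | l1 l2 Dl_max].
  by rewrite /Dl DlE DlE lee_fin lerD2l lerN2 (lam_min l1 l2).1.
have := Dl_max lam1 lam2; rewrite /Dl DlE DlE lee_fin lerD2l lerN2 => cost_le.
have /andP[/eqP-> /eqP->] // : (l1 == lam1) && (l2 == lam2).
by rewrite -(lam_min l1 l2).2 eq_le cost_le (lam_min l1 l2).1.
Qed.
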